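(* Let $\mathcal{Q}\subseteq 2^E$ ($E$ finite) be Rayleigh (respectively weakly Rayleigh). Then there are matroids $\mathcal{M}$ and $\mathcal{N}$ on $E$ such that $\mathcal{Q}=\mathbf{I}\mathcal{M}\cap\mathbf{S}\mathcal{N}$, where $\mathbf{I}\mathcal{M}$ is the set of independent sets of $\mathcal{M}$ and $\mathbf{S}\mathcal{N}$ the set of spanning sets of $\mathcal{N}$. Moreover, the sets of bases $\mathbf{B}\mathcal{M}$ and $\mathbf{B}\mathcal{N}$ are both Rayleigh (respectively weakly Rayleigh).
   Context: For $\omega:2^E\to[0,\infty)$ not identically zero, $Z(\omega;\mathbf{y})=\sum_S\omega(S)\prod_{e\in S}y_e$; with subscripts denoting partial derivatives, $Z$ is Rayleigh if $Z_eZ_f-Z_{ef}Z\ge0$ for all distinct $e,f$ and all positive $\mathbf{y}$. A set-system $\mathcal{Q}$ is Rayleigh if $Z(\mathcal{Q};\mathbf{y})=\sum_{S\in\mathcal{Q}}\prod_{e\in S}y_e$ is Rayleigh, and weakly Rayleigh if some $\omega\ge0$ with $\{S:\omega(S)>0\}=\mathcal{Q}$ has $Z(\omega;\mathbf{y})$ Rayleigh. *)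

From HB Require Import structures.
From mathcomp Require Import all_boot all_order all_algebra.
From mathcomp Require Import reals.
Set Implicit Arguments. Unset Strict Implicit. Unset Printing Implicit Defensive.
Import Order.TTheory GRing.Theory Num.Theory.
Local Open Scope ring_scope.

Section Rayleigh.
Variables (R : realType) (E : finType).

Definition Zpol (w : {set E} -> R) (y : E -> R) : R :=
  \sum_(S : {set E}) w S * \prod_(e in S) y e.

(* Partial derivative Z_e of the multiaffine polynomial Z (written out). *)
Definition Zd1 (w : {set E} -> R) (e : E) (y : E -> R) : R :=
  \sum_(S : {set E} | e \in S) w S * \prod_(g in S :\ e) y g.

(* Second partial derivative Z_{ef}, e <> f (written out). *)
Definition Zd2 (w : {set E} -> R) (e f : E) (y : E -> R) : R :=
  \sum_(S : {set E} | (e \in S) && (f \in S)) w S * \prod_(g in (S :\ e) :\ f) y g.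

Definition rayleigh_poly (w : {set E} -> R) : Prop :=
  forall e f : E, e != f -> forall y : E -> R, (forall g, 0 < y g) ->
    Zd1 w e y * Zd1 w f y - Zd2 w e f y * Zpol w y >= 0.

Definition Rayleigh (Q : {set {set E}}) : Prop :=
  Q != set0 /\ rayleigh_poly (fun S => if S \in Q then 1 else 0).

Definition weakly_Rayleigh (Q : {set {set E}}) : Prop :=
  Q != set0 /\
  exists w : {set E} -> R,
    (forall S, 0 <= w S) /\ (forall S, (0 < w S) = (S \in Q)) /\ rayleigh_poly w.

End Rayleigh.

Section Matroid.
Variable E : finType.

Definition is_matroid (I : {set {set E}}) : Prop :=
  [/\ set0 \in I,
      (forall A B : {set E}, B \in I -> A \subset B -> A \in I) &
      (forall A B : {set E}, A \in I -> B \in I -> #|A| < #|B| ->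
         exists2 x, x \in B :\: A & x |: A \in I)]%N.

Definition bases (I : {set {set E}}) : {set {set E}} :=
  [set B in I | [forall A in I, (B \subset A) ==> (A == B)]].

Definition spanning (I : {set {set E}}) : {set {set E}} :=
  [set S : {set E} | [exists B in bases I, B \subset S]].

End Matroid.

(* Split the generating polynomial by the membership of e and f: multiplied by
   y_e y_f, the Rayleigh inequality says Z^{ef} Z^{-} <= Z^{e} Z^{f}, where Z^{ef}
   collects the sets containing e and f, Z^{e} those containing e but not f, Z^{f}
   those containing f but not e, and Z^{-} those containing neither.
   Substituting y_g = z_g t^(c g) for an integer weight c and letting t grow, the
   leading terms of this inequality cannot be negative.  For the support Q this gives
   a tropical exchange property: if S, T are in Q, S contains e and f and T neither,
   then some X, Y in Q separate e and f with c(S) + c(T) <= c(X) + c(Y).  A weight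
   that heavily rewards S :&: T and penalises the outside of S :|: T forces X and Y
   into the interval [S :&: T, S :|: T]; with c constant this makes Q convex and
   lets members of Q grow to a largest member and shrink to a smallest one, and the
   largest (smallest) members satisfy basis exchange.  Hence Q = I(M) :&: S(N) for
   the matroids M and N whose bases are the largest and the smallest members of Q.
   The same leading-term argument with c = 1 or c = -1 shows that the top and the
   bottom homogeneous parts of a Rayleigh polynomial are Rayleigh. *)

From HB Require Import structures.
From mathcomp Require Import all_boot all_order all_algebra.
From mathcomp Require Import reals.
From mathcomp Require Import zify ring.
Set Implicit Arguments. Unset Strict Implicit. Unset Printing Implicit Defensive.
Import Order.TTheory GRing.Theory Num.Theory.

Section BasisFamily.
Variable E : finType.
Implicit Types (F : {set {set E}}) (A B I S T : {set E}).

Definition downset F := [set I : {set E} | [exists B in F, I \subset B]].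

Lemma downsetP F I : reflect (exists2 B, B \in F & I \subset B) (I \in downset F).
Proof. by rewrite inE; apply: (iffP exists_inP). Qed.

Definition basis_exchange F := forall S T e, S \in F -> T \in F -> e \in S :\: T ->
  exists2 f, f \in T :\: S & f |: (S :\ e) \in F.

Lemma card_swap S e f : e \in S -> f \notin S -> #|f |: (S :\ e)| = #|S|.
Proof. by move=> eS fS; rewrite cardsU1 !inE (negbTE fS) andbF (cardsD1 e S) eS. Qed.

Variables (F : {set {set E}}) (r : nat).
Hypotheses (F0 : F != set0) (cardF : {in F, forall B, #|B| = r}) (exF : basis_exchange F).

Lemma downset_matroid : is_matroid (downset F).
Proof.
split.
- by have [B BF] := set0Pn _ F0; apply/downsetP; exists B; rewrite ?sub0set.
- by move=> A B /downsetP[S SF BS] AB; apply/downsetP; exists S; rewrite ?(subset_trans AB).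
move=> A B /downsetP[S0 S0F AS0] /downsetP[T0 T0F BT0] ltAB.
case: (boolP [exists x in B :\: A, x |: A \in downset F]) => [/exists_inP//|/exists_inPn noaug].
pose P p := [&& p.1 \in F, A \subset p.1, p.2 \in F & B \subset p.2].
have P0 : P (S0, T0) by apply/and4P.
case: (arg_maxnP (fun p => #|p.1 :&: p.2|) P0) => -[S T] /= /and4P[SF AS TF BT] maxST.
have SBA : S :&: B \subset A.
  apply/subsetP => x; rewrite inE => /andP[xS xB]; apply: contraT => xA.
  have xBA : x \in B :\: A by rewrite inE xA xB.
  have /negP[] := noaug x xBA.
  by apply/downsetP; exists S; rewrite // subUset sub1set xS.
have [y] : exists y, y \in (S :\: A) :\: T.
  apply/set0Pn; rewrite setD_eq0; apply/negP => SAT.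
  have : S :\: A \subset T :\: B.
    apply/subsetP => x xSA; rewrite inE (subsetP SAT x xSA) andbT.
    move: xSA; rewrite inE => /andP[xA xS]; apply: contra xA => xB.
    by apply: (subsetP SBA); rewrite inE xS.
  move/subset_leq_card; rewrite !cardsDS // (cardF SF) (cardF TF) leqNgt => /negP[].
  have ltAr : #|A| < r by rewrite (leq_trans ltAB) // -(cardF TF) subset_leq_card.
  exact: ltn_sub2l ltAr ltAB.
rewrite !inE => /and3P[yT yA yS].
have yST : y \in S :\: T by rewrite inE yT.
have [f] := exF SF TF yST; rewrite inE => /andP[fS fT] S'F.
have /maxST /= : P (f |: (S :\ y), T).
  rewrite /P S'F TF BT /= andbT; apply/subsetP => x xA; rewrite !inE (subsetP AS x xA) andbT.
  by apply/orP; right; apply: contraNneq yA => <-.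
rewrite leqNgt => /negP[].
have : f |: (S :&: T) \subset (f |: (S :\ y)) :&: T.
  rewrite subUset sub1set !inE eqxx fT /=; apply/subsetP => x; rewrite !inE => /andP[xS xT].
  by rewrite xS xT !andbT; apply/orP; right; apply: contraTneq xT => ->.
by move/subset_leq_card; rewrite cardsU1 inE (negbTE fS).
Qed.

Lemma bases_downset : bases (downset F) = F.
Proof.
apply/setP => B; rewrite inE; apply/andP/idP => [[/downsetP[S SF BS] /forall_inP maxB]|BF].
  suff /eqP<- : S == B by [].
  by rewrite (implyP (maxB S _)) //; apply/downsetP; exists S.
split; first by apply/downsetP; exists B.
apply/forall_inP => A /downsetP[S SF AS]; apply/implyP => BA.
have BS := subset_trans BA AS.
suff eBS : B = S by rewrite eqEsubset BA andbT eBS.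
by apply/eqP; rewrite eqEcard BS (cardF SF) (cardF BF) leqnn.
Qed.

Lemma matroid_bases_neq0 (I : {set {set E}}) : is_matroid I -> bases I != set0.
Proof.
case=> I0 _ _; apply/set0Pn.
case: (arg_maxnP (P := [pred A | A \in I]) (fun A => #|A|) I0) => B /= BI maxB.
exists B; rewrite inE BI; apply/forall_inP => A AI; apply/implyP => BA.
by rewrite eq_sym eqEcard BA maxB.
Qed.

End BasisFamily.

Section TropicalRayleigh.
Variable E : finType.
Local Open Scope ring_scope.
Implicit Types (Q : {set {set E}}) (A B S T U V X Y Z : {set E}) (c : E -> int).

Definition csum c S : int := \sum_(g in S) c g.

Lemma csum_const (k : int) S : csum (fun=> k) S = k * #|S|%:Z.
Proof. by rewrite /csum sumr_const -mulr_natr natz. Qed.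

Lemma csum_indicator A S : csum (fun g => (g \in A)%:R) S = #|S :&: A|%:Z.
Proof.
transitivity (\sum_(g in S | g \in A) (1 : int)).
  by rewrite big_mkcondr; apply: eq_bigr => g _; case: (g \in A).
by rewrite -natz -sumr_const; apply: eq_bigl => g; rewrite inE.
Qed.

Lemma norm_csum_le c S : `|csum c S| <= \sum_g `|c g|.
Proof.
apply: le_trans (ler_norm_sum _ _ _) _.
by rewrite [leRHS](bigID (mem S)) /= lerDl sumr_ge0.
Qed.

Definition trop_rayleigh Q := forall e f, e != f -> forall S T, S \in Q -> T \in Q ->
  e \in S -> f \in S -> e \notin T -> f \notin T -> forall c, exists X Y,
  [/\ X \in Q, Y \in Q, [&& e \in X, f \notin X, f \in Y & e \notin Y] &
      csum c S + csum c T <= csum c X + csum c Y].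

Lemma penalty_vanishes (N s : int) (d : nat) : 0 < N -> s < N -> N * d%:Z <= s ->
  d = 0%N /\ 0 <= s.
Proof. by move=> N0 ltsN leNds; nia. Qed.

Section TropicalFamily.
Variable Q : {set {set E}}.
Hypothesis trQ : trop_rayleigh Q.

Lemma trop_interval c S T e f : e != f -> S \in Q -> T \in Q ->
  e \in S -> f \in S -> e \notin T -> f \notin T -> exists X Y,
  [/\ X \in Q, Y \in Q, [&& e \in X, f \notin X, f \in Y & e \notin Y],
      [&& S :&: T \subset X, X \subset S :|: T, S :&: T \subset Y & Y \subset S :|: T] &
      csum c S + csum c T <= csum c X + csum c Y].
Proof.
move=> ef SQ TQ eS fS eT fT.
have [N N0 ltN] : exists2 N : int, 0 < N &
    forall X Y, csum c X + csum c Y - (csum c S + csum c T) < N.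
  exists (4 * \sum_g `|c g| + 1) => [|X Y]; first by rewrite ltzD1 mulr_ge0 ?sumr_ge0.
  have bnd Z : - \sum_g `|c g| <= csum c Z <= \sum_g `|c g| by rewrite -lter_norml norm_csum_le.
  move: (bnd S) (bnd T) (bnd X) (bnd Y).
  by move: (csum c S) (csum c T) (csum c X) (csum c Y) (\sum_g `|c g|); clear; lia.
pose d Z := (#|S :&: T :\: Z| + #|Z :\: (S :|: T)|)%N.
have dE Z : (d Z == 0%N) = (S :&: T \subset Z) && (Z \subset S :|: T).
  by rewrite addn_eq0 !cards_eq0 !setD_eq0.
pose c' g := c g + N * ((g \in S :&: T)%:R - (g \in ~: (S :|: T))%:R).
have c'E Z : csum c' Z = csum c Z + N * (#|S :&: T|%:Z - (d Z)%:Z).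
  rewrite /csum big_split /= -mulr_sumr sumrB -!/(csum _ _) !csum_indicator.
  by rewrite /d -(cardsID Z (S :&: T)) [S :&: T :&: Z]setIC -setDE !PoszD; ring.
have [X [Y [XQ YQ efXY]]] := trQ ef SQ TQ eS fS eT fT c'.
have dS : d S = 0%N by apply/eqP; rewrite dE subsetIl subsetUl.
have dT : d T = 0%N by apply/eqP; rewrite dE subsetIr subsetUr.
rewrite !c'E dS dT => le_c'.
have : N * (d X + d Y)%:Z <= csum c X + csum c Y - (csum c S + csum c T).
  move: le_c'; move: (csum c S) (csum c T) (csum c X) (csum c Y) (d X) (d Y) #|S :&: T|.
  by clear -N; lia.
case/(penalty_vanishes N0 (ltN X Y)) => /eqP; rewrite addn_eq0 !dE subr_ge0 => dXY le_c.
by exists X, Y; split=> //; rewrite andbA.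
Qed.

Lemma setDS_setI A B Z : A :&: B \subset Z -> A :\: Z \subset A :\: B.
Proof. by move=> ABZ; rewrite -[A :\: B]set0U -(setDv A) -setDIr setDS. Qed.

Lemma setSD_setU A B Z : Z \subset B :|: A -> Z :\: A \subset B :\: A.
Proof. by move=> ZBA; rewrite -[B :\: A]setU0 -(setDv A) -setDUl setSD. Qed.

Lemma card_lt_missing A B x : A \subset B -> x \in B -> x \notin A -> (#|A| < #|B|)%N.
Proof. by move=> AB xB xA; apply/proper_card/properP; split=> //; exists x. Qed.

Lemma trop_convex S U V : S \in Q -> U \in Q -> S \subset V -> V \subset U -> V \in Q.
Proof.
have [n] := ubnP #|U :\: S|; elim: n S U V => // n IHn S U V ltUn SQ UQ SV VU.
have [VS | [e eVS]] := set_0Vmem (V :\: S).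
  suff -> : V = S by [].
  by apply/eqP; rewrite eqEsubset SV -setD_eq0 VS eqxx.
have [UV | [f fUV]] := set_0Vmem (U :\: V).
  suff -> : V = U by [].
  by apply/eqP; rewrite eqEsubset VU -setD_eq0 UV eqxx.
move: eVS fUV; rewrite !inE => /andP[eS eV] /andP[fV fU].
have SU := subset_trans SV VU.
have fS : f \notin S by apply: contra fV; apply/subsetP.
have ef : e != f by apply: contraNneq fV => <-.
have [X [_ [XQ _ /and4P[eX fX _ _] /and4P[SX XU _ _] _]]] :=
  trop_interval (fun=> 0) ef UQ SQ (subsetP VU e eV) fU eS fS.
rewrite (setIidPr SU) (setUidPl SU) in SX XU.
have eSQ : e |: S \in Q.
  apply: (IHn S X) => //; last by rewrite subUset sub1set eX.
    apply: leq_trans _ (ltnSE ltUn); apply: (card_lt_missing (x := f)); first exact: setSD.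
      by rewrite inE fU fS.
    by rewrite inE (negbTE fX) andbF.
  exact: subsetUr.
apply: (IHn (e |: S) U) => //; last by rewrite subUset sub1set eV.
apply: leq_trans _ (ltnSE ltUn); apply: (card_lt_missing (x := e)); first exact/setDS/subsetUr.
  by rewrite inE eS (subsetP VU e eV).
by rewrite !inE eqxx.
Qed.

Lemma trop_grow S T : S \in Q -> T \in Q -> (#|S| < #|T|)%N ->
  exists2 X, X \in Q & S \proper X.
Proof.
move=> SQ TQ ltST.
have PT : [pred X | (X \in Q) && (#|S| < #|X|)%N] T by rewrite /= TQ.
case: (arg_minnP (fun X => #|X :\: S|) PT) => {T TQ ltST PT} T /andP[TQ ltST] minT.
have [ST | nST] := boolP (S \subset T); first by exists T; rewrite ?properEcard ?ST.
have [e [f [eTS fTS ef]]] : exists e f, [/\ e \in T :\: S, f \in T :\: S & e != f].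
  apply/card_gt1P; have : (0 < #|S :\: T|)%N by rewrite card_gt0 setD_eq0.
  by move: ltST; rewrite -(cardsID T S) -(cardsID S T) setIC; lia.
move: (eTS) (fTS); rewrite !inE => /andP[eS eT] /andP[fS fT].
have [X [Y [XQ YQ /and4P[_ fX _ eY] /and4P[_ XTS _ YTS] le_card]]] :=
  trop_interval (fun=> 1) ef TQ SQ eT fT eS fS.
have small Z g : Z \in Q -> Z \subset T :|: S -> g \in T :\: S -> g \notin Z ->
    (#|Z| <= #|S|)%N.
  move=> ZQ ZTS gTS gZ; rewrite leqNgt; apply/negP => ltSZ.
  have := minT Z; rewrite /= ZQ ltSZ => /(_ isT); rewrite leqNgt (card_lt_missing (x := g)) //.
    exact: setSD_setU.
  by rewrite inE (negbTE gZ) andbF.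
rewrite !csum_const !mul1r -!PoszD lez_nat in le_card.
have := leq_trans le_card (leq_add (small X f XQ XTS fTS fX) (small Y e YQ YTS eTS eY)).
by rewrite leq_add2r leqNgt ltST.
Qed.

Lemma trop_shrink S T : S \in Q -> T \in Q -> (#|T| < #|S|)%N ->
  exists2 X, X \in Q & X \proper S.
Proof.
move=> SQ TQ ltTS.
have PT : [pred X | (X \in Q) && (#|X| < #|S|)%N] T by rewrite /= TQ.
case: (arg_minnP (fun X => #|S :\: X|) PT) => {T TQ ltTS PT} T /andP[TQ ltTS] minT.
have [TS | nTS] := boolP (T \subset S); first by exists T; rewrite ?properEcard ?TS.
have [e [f [eST fST ef]]] : exists e f, [/\ e \in S :\: T, f \in S :\: T & e != f].
  apply/card_gt1P; have : (0 < #|T :\: S|)%N by rewrite card_gt0 setD_eq0.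
  by move: ltTS; rewrite -(cardsID T S) -(cardsID S T) setIC; lia.
move: (eST) (fST); rewrite !inE => /andP[eT eS] /andP[fT fS].
have [X [Y [XQ YQ /and4P[eX _ fY _] /and4P[STX _ STY _] le_card]]] :=
  trop_interval (fun=> -1) ef SQ TQ eS fS eT fT.
have large Z g : Z \in Q -> S :&: T \subset Z -> g \in S :\: T -> g \in Z ->
    (#|S| <= #|Z|)%N.
  move=> ZQ STZ gST gZ; rewrite leqNgt; apply/negP => ltZS.
  have := minT Z; rewrite /= ZQ ltZS => /(_ isT); rewrite leqNgt (card_lt_missing (x := g)) //.
    exact: setDS_setI.
  by rewrite inE gZ.
rewrite !csum_const !mulN1r -!opprD lerN2 -!PoszD lez_nat in le_card.
have := leq_trans (leq_add (large X e XQ STX eST eX) (large Y f YQ STY fST fY)) le_card.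
by rewrite leq_add2l leqNgt ltTS.
Qed.

Definition layer r := [set S in Q | #|S| == r].

Lemma trop_layer_exchange (sg : int) r : sg != 0 ->
  {in Q, forall S, sg * #|S|%:Z <= sg * r%:Z} -> basis_exchange (layer r).
Proof.
move=> sg0 extQ S T e SL; have [n] := ubnP #|S :\: T|.
elim: n T => // n IHn T ltSTn TL eST.
move: (SL) (TL) (eST); rewrite !inE => /andP[SQ /eqP Sr] /andP[TQ /eqP Tr] /andP[eT eS].
have [STe | [h]] := set_0Vmem ((S :\: T) :\ e).
  have [TS | [f fTS]] := set_0Vmem (T :\: S).
    suff TeqS : T = S by move: eT; rewrite TeqS eS.
    by apply/eqP; rewrite eqEcard -setD_eq0 TS Sr Tr eqxx leqnn.
  exists f => //; move: fTS; rewrite inE => /andP[fS fT].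
  suff -> : f |: (S :\ e) = T by [].
  apply/eqP; rewrite eqEcard card_swap // Sr Tr leqnn andbT subUset sub1set fT /=.
  apply/subsetP => x; rewrite !inE => /andP[xe xS]; apply: contraT => xT.
  by have /setP/(_ x) := STe; rewrite !inE xe xT xS.
rewrite !inE => /and3P[he hT hS]; rewrite eq_sym in he.
have [X [Y [XQ YQ /and4P[_ _ hY eY] /and4P[_ _ STY YST] le_card]]] :=
  trop_interval (fun=> sg) he SQ TQ eS hS eT hT.
rewrite !csum_const Sr Tr in le_card.
have /(le_trans le_card) : sg * #|X|%:Z + sg * #|Y|%:Z <= sg * r%:Z + sg * #|Y|%:Z.
  by rewrite lerD2r extQ.
rewrite lerD2l => geY.
have /(mulfI sg0) [Yr] : sg * #|Y|%:Z = sg * r%:Z by apply/le_anti; rewrite geY extQ.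
have YL : Y \in layer r by rewrite inE YQ Yr eqxx.
have eSY : e \in S :\: Y by rewrite inE eY eS.
have [|f] := IHn Y _ YL eSY.
  apply: leq_trans _ (ltnSE ltSTn); apply: (card_lt_missing (x := h)); first exact: setDS_setI.
    by rewrite inE hT hS.
  by rewrite inE hY.
rewrite inE => /andP[fS fY] fL; exists f => //.
by move: (subsetP YST f fY); rewrite !inE (negbTE fS).
Qed.

Lemma trop_extend_top S T : S \in Q -> T \in Q -> {in Q, forall U, #|U| <= #|T|}%N ->
  exists2 U, U \in layer #|T| & S \subset U.
Proof.
move=> SQ TQ maxT.
have PS : [pred U | (U \in Q) && (S \subset U)] S by rewrite /= SQ subxx.
case: (arg_maxnP (fun U => #|U|) PS) => U /andP[UQ SU] maxU.
exists U => //; rewrite inE UQ eqn_leq maxT //= leqNgt; apply/negP => ltUT.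
have [X XQ UX] := trop_grow UQ TQ ltUT.
have := maxU X; rewrite /= XQ (subset_trans SU (proper_sub UX)) => /(_ isT).
by rewrite leqNgt proper_card.
Qed.

Lemma trop_extend_bot S T : S \in Q -> T \in Q -> {in Q, forall U, #|T| <= #|U|}%N ->
  exists2 U, U \in layer #|T| & U \subset S.
Proof.
move=> SQ TQ minT.
have PS : [pred U | (U \in Q) && (U \subset S)] S by rewrite /= SQ subxx.
case: (arg_minnP (fun U => #|U|) PS) => U /andP[UQ US] minU.
exists U => //; rewrite inE UQ eqn_leq minT //= andbT leqNgt; apply/negP => ltTU.
have [X XQ XU] := trop_shrink UQ TQ ltTU.
have := minU X; rewrite /= XQ (subset_trans (proper_sub XU) US) => /(_ isT).
by rewrite leqNgt proper_card.
Qed.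

Lemma trop_rayleigh_matroids Smax Smin : Smax \in Q -> Smin \in Q ->
  {in Q, forall S, #|Smin| <= #|S| <= #|Smax|}%N ->
  [/\ is_matroid (downset (layer #|Smax|)), is_matroid (downset (layer #|Smin|)),
      Q = downset (layer #|Smax|) :&: spanning (downset (layer #|Smin|)),
      bases (downset (layer #|Smax|)) = layer #|Smax| &
      bases (downset (layer #|Smin|)) = layer #|Smin|].
Proof.
move=> maxQ minQ boundQ.
have layer_card r : {in layer r, forall S, #|S| = r} by move=> S; rewrite inE => /andP[_ /eqP].
have layer0 S : S \in Q -> layer #|S| != set0.
  by move=> SQ; apply/set0Pn; exists S; rewrite inE SQ eqxx.
have exTop : basis_exchange (layer #|Smax|).
  apply: (trop_layer_exchange (sg := 1)) => // S SQ.
  by rewrite !mul1r lez_nat; case/andP: (boundQ S SQ).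
have exBot : basis_exchange (layer #|Smin|).
  apply: (trop_layer_exchange (sg := -1)) => // S SQ.
  by rewrite !mulN1r lerN2 lez_nat; case/andP: (boundQ S SQ).
have botB := bases_downset (@layer_card #|Smin|).
split.
- exact: downset_matroid (layer0 _ maxQ) (@layer_card _) exTop.
- exact: downset_matroid (layer0 _ minQ) (@layer_card _) exBot.
- apply/setP => S; rewrite inE [S \in spanning _]inE botB.
  apply/idP/andP => [SQ | [/downsetP[T TL ST] /exists_inP[B BL BS]]].
    have [T TL ST] := trop_extend_top SQ maxQ (fun U UQ => proj2 (andP (boundQ U UQ))).
    have [B BL BS] := trop_extend_bot SQ minQ (fun U UQ => proj1 (andP (boundQ U UQ))).
    by split; [apply/downsetP; exists T | apply/exists_inP; exists B].
  rewrite !inE in BL TL; case/andP: BL => BQ _; case/andP: TL => TQ _.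
  exact: trop_convex BQ TQ BS ST.
- exact: bases_downset (@layer_card #|Smax|).
- exact: botB.
Qed.

End TropicalFamily.
End TropicalRayleigh.

Section RayleighExpansion.
Variables (R : realType) (E : finType).
Local Open Scope ring_scope.
Implicit Types (w : {set E} -> R) (y z : E -> R) (S : {set E}) (p : {set E} * {set E}).

Definition wmono w y S := w S * \prod_(g in S) y g.

Definition Zpart w y (P : pred {set E}) := \sum_(S | P S) wmono w y S.

Lemma Zpart_mul w y (P1 P2 : pred {set E}) :
  Zpart w y P1 * Zpart w y P2 =
  \sum_p (P1 p.1 && P2 p.2)%:R * (wmono w y p.1 * wmono w y p.2).
Proof.
rewrite /Zpart big_distrlr pair_big /= big_mkcond; apply: eq_bigr => p _.
by case: ifP; rewrite ?mul1r ?mul0r.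
Qed.

Lemma Zpart_split w y (P Q : pred {set E}) :
  Zpart w y P = Zpart w y (fun S => P S && Q S) + Zpart w y (fun S => P S && ~~ Q S).
Proof. exact: bigID. Qed.

Lemma Zpol_Zpart w y : Zpol w y = Zpart w y predT.
Proof. by []. Qed.

Lemma Zd1_Zpart w e y : y e * Zd1 w e y = Zpart w y (fun S => e \in S).
Proof.
rewrite /Zd1 mulr_sumr; apply: eq_bigr => S eS.
by rewrite /wmono (big_setD1 e eS) mulrCA.
Qed.

Lemma Zd2_Zpart w e f y : e != f ->
  y e * y f * Zd2 w e f y = Zpart w y (fun S => (e \in S) && (f \in S)).
Proof.
move=> ef; rewrite /Zd2 mulr_sumr; apply: eq_bigr => S /andP[eS fS].
rewrite /wmono (big_setD1 e eS) (big_setD1 f) /=; first by ring.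
by rewrite !inE eq_sym ef.
Qed.

Definition exchange_sign e f p : R :=
  (((e \in p.1) && (f \notin p.1)) && ((f \in p.2) && (e \notin p.2)))%:R -
  (((e \in p.1) && (f \in p.1)) && ((e \notin p.2) && (f \notin p.2)))%:R.

Definition rayleigh_term w e f y p := exchange_sign e f p * (wmono w y p.1 * wmono w y p.2).

Lemma rayleigh_expansion w e f y : e != f ->
  y e * y f * (Zd1 w e y * Zd1 w f y - Zd2 w e f y * Zpol w y) = \sum_p rayleigh_term w e f y p.
Proof.
move=> ef.
pose a := Zpart w y (fun S => (e \in S) && (f \in S)).
pose b := Zpart w y (fun S => (e \in S) && (f \notin S)).
pose c := Zpart w y (fun S => (f \in S) && (e \notin S)).
pose d := Zpart w y (fun S => (e \notin S) && (f \notin S)).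
have Ze : Zpart w y (fun S => e \in S) = a + b := Zpart_split _ _ _ _.
have Zf : Zpart w y (fun S => f \in S) = a + c.
  rewrite (Zpart_split _ _ _ (fun S => e \in S)); congr (_ + _).
  by apply: eq_bigl => S; rewrite andbC.
have Z : Zpol w y = a + b + c + d.
  rewrite Zpol_Zpart (Zpart_split _ _ _ (fun S => e \in S)) Ze -!addrA; congr (_ + (_ + _)).
  rewrite (Zpart_split _ _ _ (fun S => f \in S)); congr (_ + _).
  by apply: eq_bigl => S; rewrite andbC.
transitivity ((y e * Zd1 w e y) * (y f * Zd1 w f y) - (y e * y f * Zd2 w e f y) * Zpol w y).
  by ring.
rewrite !Zd1_Zpart Zd2_Zpart // Ze Zf Z -/a.
rewrite (_ : (a + b) * (a + c) - a * (a + b + c + d) = b * c - a * d); last by ring.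
by rewrite !Zpart_mul -sumrB; apply: eq_bigr => p _; rewrite /rayleigh_term mulrBl.
Qed.

Lemma rayleigh_polyP w : rayleigh_poly w <->
  forall e f, e != f -> forall y, (forall g, 0 < y g) -> 0 <= \sum_p rayleigh_term w e f y p.
Proof.
split=> ray e f ef y ypos; have yef : 0 < y e * y f by rewrite mulr_gt0.
  by rewrite -rayleigh_expansion //; apply: mulr_ge0; [exact: ltW | exact: ray].
by have := ray e f ef y ypos; rewrite -rayleigh_expansion // pmulr_rge0.
Qed.

Lemma wmono_ge0 w y S : (forall S, 0 <= w S) -> (forall g, 0 < y g) -> 0 <= wmono w y S.
Proof. by move=> w0 ypos; rewrite mulr_ge0 ?prodr_ge0 // => g _; rewrite ltW. Qed.

Lemma rayleigh_term_eq0 w e f y p : (forall S, 0 <= w S) ->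
  ~~ ((0 < w p.1) && (0 < w p.2)) -> rayleigh_term w e f y p = 0.
Proof.
move=> w0; rewrite negb_and -!leNgt /rayleigh_term /wmono => /orP[] w_le0.
  by rewrite (@le_anti _ _ (w p.1) 0) ?w_le0 ?w0 // !mul0r mulr0.
by rewrite (@le_anti _ _ (w p.2) 0) ?w_le0 ?w0 // !mul0r !mulr0.
Qed.

Lemma rayleigh_term_le0 w e f y p : (forall S, 0 <= w S) -> (forall g, 0 < y g) ->
  ~~ [&& 0 < w p.1, 0 < w p.2, (e \in p.1) && (f \notin p.1) & (f \in p.2) && (e \notin p.2)] ->
  rayleigh_term w e f y p <= 0.
Proof.
move=> w0 ypos; have [/andP[w1 w2] | nw] := boolP ((0 < w p.1) && (0 < w p.2)); last first.
  by rewrite rayleigh_term_eq0.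
rewrite w1 w2 /= => nBC; rewrite /rayleigh_term /exchange_sign (negbTE nBC) sub0r mulNr oppr_le0.
by rewrite mulr_ge0 // mulr_ge0 // wmono_ge0.
Qed.

Lemma rayleigh_term_scale w e f z (c : E -> int) (t : R) p : 0 < t ->
  rayleigh_term w e f (fun g => z g * t ^ c g) p =
  rayleigh_term w e f z p * t ^ (csum c p.1 + csum c p.2).
Proof.
move=> t0; have t_neq0 : t != 0 by rewrite gt_eqF.
have scale S : wmono w (fun g => z g * t ^ c g) S = wmono w z S * t ^ csum c S.
  rewrite /wmono big_split mulrA; congr (_ * _).
  by rewrite /csum (big_morph _ (fun m n => expfzDr m n t_neq0) (expr0z t)).
by rewrite /rayleigh_term !scale expfzDr //; ring.
Qed.

End RayleighExpansion.

Section LaurentSign.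
Variable R : realFieldType.
Local Open Scope ring_scope.

Lemma exists_laurent_neg (I : finType) (a : I -> R) (k : I -> int) (M : int) :
  (forall i, M < k i -> a i <= 0) -> \sum_(i | k i == M) a i < 0 ->
  exists2 t, 0 < t & \sum_i a i * t ^ k i < 0.
Proof.
set N := \sum_(i | k i == M) a i => top N_lt0.
pose C := \sum_(i | k i < M) `|a i|.
(* the terms of degree below M are swamped by the degree M coefficient once t >= 1 + C / |N| *)
pose t := 1 + C / - N.
have t_ge1 : 1 <= t by rewrite lerDl divr_ge0 ?sumr_ge0 // oppr_ge0 ltW.
have t_gt0 : 0 < t by apply: lt_le_trans t_ge1.
exists t => //.
pose b i := (if k i == M then a i else 0) * t ^ M + (if k i < M then `|a i| else 0) * t ^ (M - 1).
apply: (@le_lt_trans _ _ (\sum_i b i)).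
  apply: ler_sum => i _; rewrite /b; case: (ltgtP (k i) M) => [ltkM | ltMk | ->].
  - rewrite mul0r add0r; apply: le_trans (ler_wpM2r _ (ler_norm _)) _.
      by rewrite ltW ?exprz_gt0.
    by rewrite ler_wpM2l ?ler_weXz2l //; lia.
  - by rewrite !mul0r addr0 mulr_le0_ge0 ?top // ltW ?exprz_gt0.
  - by rewrite mul0r addr0.
rewrite big_split /= -!mulr_suml -!big_mkcond -/N -/C.
have -> : N * t ^ M + C * t ^ (M - 1) = t ^ (M - 1) * (N * t + C).
  by rewrite -{1}(subrK 1 M) expfzDr ?gt_eqF // expr1z; ring.
have -> : N * t + C = N by rewrite /t; field; rewrite ?oppr_eq0 lt_eqF.
by rewrite pmulr_rlt0 ?exprz_gt0.
Qed.

End LaurentSign.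

Section Tropicalization.
Variables (R : realType) (E : finType).
Local Open Scope ring_scope.
Implicit Types (w : {set E} -> R) (z : E -> R) (c : E -> int) (p : {set E} * {set E}).

Lemma rayleigh_leading_ge0 w e f z c (M : int) :
  rayleigh_poly w -> e != f -> (forall g, 0 < z g) ->
  (forall p, M < csum c p.1 + csum c p.2 -> rayleigh_term w e f z p <= 0) ->
  0 <= \sum_(p | csum c p.1 + csum c p.2 == M) rayleigh_term w e f z p.
Proof.
move=> ray ef zpos top; rewrite leNgt; apply/negP => /(exists_laurent_neg top)[t t0].
have ypos g : 0 < z g * t ^ c g by rewrite mulr_gt0 ?exprz_gt0.
have := (rayleigh_polyP w).1 ray e f ef _ ypos.
under eq_bigr => p _ do rewrite rayleigh_term_scale //.
by rewrite leNgt => /negP.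
Qed.

Lemma rayleigh_support_trop w : (forall S, 0 <= w S) -> rayleigh_poly w ->
  trop_rayleigh [set S | 0 < w S].
Proof.
move=> w0 ray e f ef S T; rewrite !inE => wS wT eS fS eT fT c.
pose M := csum c S + csum c T.
pose good p := [&& 0 < w p.1, 0 < w p.2, (e \in p.1) && (f \notin p.1),
                   (f \in p.2) && (e \notin p.2) & M <= csum c p.1 + csum c p.2].
have [/existsP[[X Y] /and5P[wX wY /andP[eX fX] /andP[fY eY] le_c]] | /existsPn bad] :=
  boolP [exists p, good p].
  by exists X, Y; rewrite !inE wX wY eX fX fY eY.
have one_pos (g : E) : 0 < (fun=> 1 : R) g by [].
have term_le0 p : M <= csum c p.1 + csum c p.2 -> rayleigh_term w e f (fun=> 1) p <= 0.
  move=> le_M; apply: rayleigh_term_le0 => //; apply: contra (bad p) => /and4P[w1 w2 B C].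
  by apply/and5P.
have := rayleigh_leading_ge0 ray ef one_pos (fun p lt_M => term_le0 p (ltW lt_M)).
rewrite (bigD1 (S, T)) //= leNgt => /negP[].
apply: ltr_nwDl; last by apply: sumr_le0 => p /andP[/eqP le_M _]; apply: term_le0; rewrite le_M.
rewrite /rayleigh_term /exchange_sign /= fS eT fT eS /= sub0r mulN1r oppr_lt0.
by rewrite /wmono !prodr_const !expr1n !mulr1 mulr_gt0.
Qed.

Definition restrict w (B : {set {set E}}) S := if S \in B then w S else 0.

Lemma rayleigh_restrict_extremal w (B : {set {set E}}) c (m : int) :
  (forall S, 0 <= w S) -> rayleigh_poly w ->
  (forall S, 0 < w S -> csum c S <= m /\ (S \in B) = (csum c S == m)) ->
  rayleigh_poly (restrict w B).
Proof.
move=> w0 ray extB; apply/rayleigh_polyP => e f ef z zpos.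
have wB0 S : 0 <= restrict w B S by rewrite /restrict; case: ifP.
have wB_pos S : 0 < restrict w B S -> 0 < w S by rewrite /restrict; case: ifP; rewrite ?ltxx.
have termB p : rayleigh_term (restrict w B) e f z p =
    if csum c p.1 + csum c p.2 == m + m then rayleigh_term w e f z p else 0.
  have [/andP[w1 w2] | nw] := boolP ((0 < w p.1) && (0 < w p.2)); last first.
    rewrite !rayleigh_term_eq0 ?if_same //; apply: contra nw.
    by case/andP => /wB_pos -> /wB_pos ->.
  have [c1 B1] := extB _ w1; have [c2 B2] := extB _ w2.
  have -> : (csum c p.1 + csum c p.2 == m + m) = (p.1 \in B) && (p.2 \in B).
    rewrite B1 B2; apply/eqP/andP => [|[/eqP-> /eqP->] //].
    by move: c1 c2; move: (csum c p.1) (csum c p.2) => x1 x2; clear; split; apply/eqP; lia.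
  rewrite /rayleigh_term /wmono /restrict.
  by case: (p.1 \in B); case: (p.2 \in B); rewrite /= ?mul0r ?mulr0.
rewrite (eq_bigr _ (fun p _ => termB p)) -big_mkcond.
apply: rayleigh_leading_ge0 => // p gt_m; rewrite rayleigh_term_eq0 //.
apply/negP => /andP[/extB[c1 _] /extB[c2 _]].
by move: gt_m; rewrite ltNge lerD.
Qed.

End Tropicalization.

Section Corollary.
Variables (R : realType) (E : finType).
Local Open Scope ring_scope.
Implicit Types (w : {set E} -> R) (Q B : {set {set E}}).

Lemma eq_rayleigh_poly w1 w2 : w1 =1 w2 -> rayleigh_poly w1 -> rayleigh_poly w2.
Proof.
move=> w12 /rayleigh_polyP ray; apply/rayleigh_polyP => e f ef y ypos.
rewrite (eq_bigr (rayleigh_term w1 e f y)) ?ray // => p _.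
by rewrite /rayleigh_term /wmono !w12.
Qed.

Lemma Rayleigh_restrict Q B : B != set0 -> B \subset Q ->
  rayleigh_poly (restrict (fun S => if S \in Q then 1 else 0 : R) B) -> Rayleigh R B.
Proof.
move=> B0 BQ ray; split=> //; apply: eq_rayleigh_poly ray => S.
by rewrite /restrict; case: ifP => // SB; rewrite (subsetP BQ S SB).
Qed.

Lemma weakly_Rayleigh_restrict w B : (forall S, 0 <= w S) -> B != set0 ->
  B \subset [set S | 0 < w S] -> rayleigh_poly (restrict w B) -> weakly_Rayleigh R B.
Proof.
move=> w0 B0 Bw ray; split=> //; exists (restrict w B).
split; [|split=> //] => S; rewrite /restrict; first by case: ifP.
case: ifP => [SB | _]; last by rewrite ltxx.
by have := subsetP Bw S SB; rewrite inE.
Qed.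

Lemma rayleigh_support_matroids w : (forall S, 0 <= w S) -> rayleigh_poly w ->
  [set S | 0 < w S] != set0 ->
  exists IM IN : {set {set E}},
    [/\ is_matroid IM, is_matroid IN, [set S | 0 < w S] = IM :&: spanning IN,
        bases IM \subset [set S | 0 < w S] /\ rayleigh_poly (restrict w (bases IM)) &
        bases IN \subset [set S | 0 < w S] /\ rayleigh_poly (restrict w (bases IN))].
Proof.
move=> w0 ray; set Q := [set S | 0 < w S] => /set0Pn[S0 S0Q].
case: (arg_maxnP (P := [pred S | S \in Q]) (fun S => #|S|) S0Q) => Smax maxQ maxS.
case: (arg_minnP (P := [pred S | S \in Q]) (fun S => #|S|) S0Q) => Smin minQ minS.
have [|mM mN QE bM bN] := trop_rayleigh_matroids (rayleigh_support_trop w0 ray) maxQ minQ.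
  by move=> S SQ; rewrite (minS S SQ); apply: maxS.
exists (downset (layer Q #|Smax|)), (downset (layer Q #|Smin|)); rewrite bM bN.
have layerQ r : layer Q r \subset Q by apply/subsetP => S; rewrite inE => /andP[].
split=> //; split=> //.
  apply: (rayleigh_restrict_extremal (c := fun=> 1) (m := #|Smax|%:Z)) => // S wS.
  have SQ : S \in Q by rewrite inE.
  by rewrite csum_const mul1r lez_nat (maxS S SQ : #|S| <= #|Smax|)%N inE SQ eqz_nat.
apply: (rayleigh_restrict_extremal (c := fun=> -1) (m := - #|Smin|%:Z)) => // S wS.
have SQ : S \in Q by rewrite inE.
by rewrite csum_const mulN1r lerN2 lez_nat (minS S SQ) inE SQ eqr_opp eqz_nat.
Qed.

End Corollary.

Theorem corollary4p11 (R : realType) (E : finType) (Q : {set {set E}}) :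
  (Rayleigh R Q ->
     exists IM IN : {set {set E}},
       [/\ is_matroid IM, is_matroid IN, Q = IM :&: spanning IN,
           Rayleigh R (bases IM) & Rayleigh R (bases IN)]) /\
  (weakly_Rayleigh R Q ->
     exists IM IN : {set {set E}},
       [/\ is_matroid IM, is_matroid IN, Q = IM :&: spanning IN,
           weakly_Rayleigh R (bases IM) & weakly_Rayleigh R (bases IN)]).
Proof.
split=> [[Q0 ray] | [Q0 [w [w0 [wQ ray]]]]].
  pose w S : R := (if S \in Q then 1 else 0)%R.
  have w0 S : (0 <= w S)%R by rewrite /w; case: (S \in Q).
  have suppQ : [set S | 0 < w S]%R = Q.
    by apply/setP => S; rewrite inE /w; case: (S \in Q); rewrite ?ltr01 ?ltxx.
  have := rayleigh_support_matroids w0 ray; rewrite suppQ.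
  case=> // IM [IN [mM mN QE [bM rM] [bN rN]]].
  exists IM, IN; split=> //.
    exact: Rayleigh_restrict (matroid_bases_neq0 mM) bM rM.
  exact: Rayleigh_restrict (matroid_bases_neq0 mN) bN rN.
have suppQ : [set S | 0 < w S]%R = Q by apply/setP => S; rewrite inE wQ.
have := rayleigh_support_matroids w0 ray; rewrite suppQ.
case=> // IM [IN [mM mN QE [bM rM] [bN rN]]].
exists IM, IN; split=> //.
  by apply: weakly_Rayleigh_restrict w0 (matroid_bases_neq0 mM) _ rM; rewrite suppQ.
by apply: weakly_Rayleigh_restrict w0 (matroid_bases_neq0 mN) _ rN; rewrite suppQ.
Qed.
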